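(* Let $V\subset\mathbb{R}^d$ be a finite antichain and $p\in S_V$. If $p$ is a syzygy-point, then $p$ is a characteristic point.
   Context: For $x,y\in\mathbb{R}^d$, $x\le y$ (dominance order) means $x_i\le y_i$ for all $i$; $y\rhd x$ means $y_i>x_i$ for all $i$; $y\rhd_i x$ means $y_i=x_i$ and $y_j>x_j$ for all $j\neq i$. $V\subset\mathbb{R}^d$ is a finite antichain in the dominance order. The orthogonal surface $S_V$ is the topological boundary of $\langle V\rangle=\{x: x\ge v\text{ for some }v\in V\}$. Flats: $U_i(v)=\{p\in S_V: p\rhd_i v\}$; for $v,w\in V$ put $v\sim_i w$ iff $U_i(v)\cap U_i(w)\neq\emptyset$, and let $\sim_i^c$ be the reflexive–transitive closure; the $i$-flat of $v$ is $F_i(v)=\overline{\bigcup_{w\sim_i^c v}U_i(w)}$, and an $i$-flat is any set of this form. A characteristic point is a point of $S_V$ that lies in some $i$-flat for every $i\in\{1,\dots,d\}$. For $p\in S_V$ let $\Delta_p$ be the simplicial complex on $\{1,\dots,d\}$ with $I\in\Delta_p$ iff $p+\epsilon\sum_{i\in I}e_i\in S_V$ for some $\epsilon>0$ ($e_i$ the standard unit vectors). $p$ is a syzygy-point if $\Delta_p$ has non-trivial (reduced) homology. *)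

From HB Require Import structures.
From mathcomp Require Import all_boot all_order all_algebra.
From mathcomp Require Import all_classical all_reals topology normedtype matrix_topology.
From Stdlib Require Import Relations.
Import numFieldNormedType.Exports.
Set Implicit Arguments. Unset Strict Implicit. Unset Printing Implicit Defensive.
Import Order.TTheory GRing.Theory Num.Theory.
Local Open Scope classical_set_scope.
Local Open Scope ring_scope.

Section OrthSurf.
Variables (R : realType) (d : nat).
Notation pt := 'rV[R]_d.

Definition dom_le (x y : pt) : Prop := forall i : 'I_d, x ord0 i <= y ord0 i.
Definition dom_gt (y x : pt) : Prop := forall i : 'I_d, x ord0 i < y ord0 i.
Definition dom_gt_i (i : 'I_d) (y x : pt) : Prop :=
  y ord0 i = x ord0 i /\ forall j : 'I_d, j != i -> x ord0 j < y ord0 j.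

Definition antichain (V : seq pt) : Prop :=
  forall v w, v \in V -> w \in V -> dom_le v w -> v = w.

Definition upset (V : seq pt) : set pt := [set x | exists2 v, v \in V & dom_le v x].

Definition surface (V : seq pt) : set pt :=
  topology_structure.closure (upset V) `\` interior (upset V).

Definition Uflat (V : seq pt) (i : 'I_d) (v : pt) : set pt :=
  [set p | surface V p /\ dom_gt_i i p v].

Definition sim_i (V : seq pt) (i : 'I_d) (v w : pt) : Prop :=
  v \in V /\ w \in V /\ exists p, Uflat V i v p /\ Uflat V i w p.

Definition simc_i (V : seq pt) (i : 'I_d) : relation pt :=
  clos_refl_trans pt (sim_i V i).

Definition flat (V : seq pt) (i : 'I_d) (v : pt) : set pt :=
  topology_structure.closure [set p | exists w, simc_i V i w v /\ Uflat V i w p].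

Definition is_flat (V : seq pt) (i : 'I_d) (Fl : set pt) : Prop :=
  exists2 v, v \in V & Fl = flat V i v.

Definition characteristic (V : seq pt) (p : pt) : Prop :=
  surface V p /\ forall i : 'I_d, exists Fl, is_flat V i Fl /\ Fl p.

Definition ind_vec (I : {set 'I_d}) : pt := \row_(i < d) (if i \in I then 1 else 0).

Definition Delta (V : seq pt) (p : pt) : set {set 'I_d} :=
  [set I | exists eps : R, 0 < eps /\ surface V (p + eps *: ind_vec I)].

End OrthSurf.

(* Reduced simplicial homology with coefficients in a field F of a family of
   faces Delta on the vertex set 'I_d, via the augmented chain complex.
   Chains of degree k (k = number of vertices of a face, k = 0 is the empty
   face, i.e. homological degree k-1) have basis the faces of Delta of size k. *)
Section Homology.
Variables (F : fieldType) (d : nat).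
Notation N := #|{: {set 'I_d}}|.

Definition face_of (a : 'I_N) : {set 'I_d} := enum_val a.

(* boundary map from size-k chains to size-(k-1) chains, as an N x N matrix
   (rows: source faces, columns: target faces; row-vector convention) *)
Definition bdry (Dl : set {set 'I_d}) (k : nat) : 'M[F]_N :=
  \matrix_(a, b)
    (if `[< Dl (face_of a) /\ Dl (face_of b) >] && (#|face_of a| == k)
     then \sum_(j in face_of a | face_of b == face_of a :\ j)
            (-1) ^+ #|[set i in face_of a | (i < j)%N]|
     else 0).

Definition nfaces (Dl : set {set 'I_d}) (k : nat) : nat :=
  #|[set s : {set 'I_d} | `[< Dl s >] && (#|s| == k)]|.

(* dim H~_{k-1} = nfaces k - rank bdry_k - rank bdry_{k+1} *)
Definition reduced_homology_nontrivial (Dl : set {set 'I_d}) : Prop :=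
  exists k : nat, (\rank (bdry Dl k) + \rank (bdry Dl k.+1) < nfaces Dl k)%N.

End Homology.

Definition syzygy_point (F : fieldType) (R : realType) (d : nat)
  (V : seq 'rV[R]_d) (p : 'rV[R]_d) : Prop :=
  reduced_homology_nontrivial F (Delta V p).

(* If p lies in no i-flat, then p is in the closure of no U_i(w), and Delta_p is
   a cone with apex i: when p + eps e_I stays on S_V, so does p + eps' (e_I + e_i)
   for small eps', since a v in V blocking every such shift would have to meet p
   in coordinate i, and pushing p up along the other coordinates where it meets v
   exhibits p as a limit of points of U_i(v).  A cone has trivial reduced homology:
   adding the apex is a chain homotopy between the identity and zero. *)

From mathcomp Require Import all_boot all_order all_algebra.
From mathcomp Require Import all_classical all_reals topology normedtype matrix_topology.
From mathcomp Require Import ring lra.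
From Stdlib Require Import Relations.
Import numFieldNormedType.Exports.
Set Implicit Arguments. Unset Strict Implicit. Unset Printing Implicit Defensive.
Import Order.TTheory GRing.Theory Num.Theory.
Local Open Scope classical_set_scope.
Local Open Scope ring_scope.

Lemma mxrank_mxsub (F : fieldType) m n m' n' (f : 'I_m' -> 'I_m) (g : 'I_n' -> 'I_n)
    (A : 'M[F]_(m, n)) :
  (\rank (mxsub f g A) <= \rank A)%N.
Proof.
have -> : mxsub f g A = rowsub f 1%:M *m A *m colsub g 1%:M.
  by rewrite mulmx_colsub mulmx1 mul_rowsub_mx mul1mx mxsubcr.
by apply: leq_trans (mxrankM_maxl _ _) _; apply: mxrankM_maxr.
Qed.

Lemma card_lt_setU1 d (x y : 'I_d) (B : {set 'I_d}) : x \notin B ->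
  #|[set l in x |: B | (l < y)%N]| = (#|[set l in B | (l < y)%N]| + (x < y))%N.
Proof.
move=> xB; case: ltnP => xy.
  have -> : [set l in x |: B | (l < y)%N] = x |: [set l in B | (l < y)%N].
    by apply/setP => l; rewrite !inE; case: eqP => [->|]; rewrite ?xy ?orbT ?orbF.
  by rewrite cardsU1 inE (negPf xB) /= addnC.
rewrite addn0; apply: eq_card => l; rewrite !inE; case: eqP => [->|] //=.
by rewrite ltnNge xy (negPf xB).
Qed.

Section ConeAcyclic.
Variables (F : fieldType) (d : nat).
Notation N := #|{: {set 'I_d}}|.
Implicit Types (A B C : {set 'I_d}) (j : 'I_d).

Lemma sum_face_of (G : {set 'I_d} -> F) : \sum_(c < N) G (face_of c) = \sum_C G C.
Proof.
rewrite (reindex (@enum_rank {set 'I_d})) /=; last first.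
  by exists (fun c => face_of c) => x _; rewrite /face_of ?enum_valK ?enum_rankK.
by apply: eq_bigr => C _; rewrite /face_of enum_rankK.
Qed.

Definition face_sign A j : F :=
  (-1) ^+ #|[set l in A | (l < j)%N]|.

Lemma face_signK A j : face_sign A j * face_sign A j = 1.
Proof. by rewrite -exprD -signr_odd addnn odd_double. Qed.

Lemma face_sign_setU1 A i : i \notin A -> face_sign (i |: A) i = face_sign A i.
Proof. by move=> iA; rewrite /face_sign card_lt_setU1 // ltnn addn0. Qed.

Lemma face_sign_setD1 A i : face_sign (A :\ i) i = face_sign A i.
Proof.
rewrite /face_sign; congr (_ ^+ _); apply: eq_card => l; rewrite !inE.
by case: eqP => [->|]; rewrite ?ltnn ?andbF.
Qed.

(* The two routes from A to i |: (A :\ j) carry opposite signs, so the cross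
   terms of the cone homotopy cancel. *)
Lemma face_sign_exchange A i j : i \notin A -> j \in A ->
  face_sign A i * face_sign (i |: A) j = - (face_sign A j * face_sign (A :\ j) i).
Proof.
move=> iA jA; have ji : j != i by apply: contraNneq iA => <-.
have /(card_lt_setU1 i) : j \notin A :\ j by rewrite finset.setD11.
rewrite finset.setD1K // /face_sign card_lt_setU1 // => ->.
rewrite !exprD; case: (ltngtP i j) => [_|_|/val_inj eij]; last by rewrite eij eqxx in ji.
- by rewrite expr0 expr1; ring.
- by rewrite expr0 expr1; ring.
Qed.

Variables (Dl : set {set 'I_d}) (i : 'I_d).

Definition bdry_coef k A B : F :=
  if `[< Dl A /\ Dl B >] && (#|A| == k)
  then \sum_(j in A | B == A :\ j) face_sign A j else 0.

Definition cone_coef A C : F :=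
  if `[< Dl A >] && (i \notin A) && (C == i |: A) then face_sign A i else 0.

Definition proj_coef k A B : F :=
  if `[< Dl A >] && (#|A| == k) && (A == B) then 1 else 0.

Hypothesis Dl_down : forall A B, B \subset A -> Dl A -> Dl B.
Hypothesis Dl_cone : forall A, Dl A -> Dl (i |: A).

Lemma bdry_coefE k A B : Dl A ->
  bdry_coef k A B = if #|A| == k then \sum_(j in A | B == A :\ j) face_sign A j else 0.
Proof.
move=> DA; rewrite /bdry_coef; case: (#|A| == k); rewrite ?andbF ?andbT //.
have [DB|nDB] := pselect (Dl B); first by rewrite asboolT.
rewrite asboolF; last by case.
rewrite big1 // => j /andP[jA /eqP BA]; exfalso; apply: nDB.
by apply: Dl_down DA; rewrite BA subsetDl.
Qed.

Lemma cone_coef_setD1 A j B : Dl A -> cone_coef (A :\ j) B =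
  if (i \notin A :\ j) && (B == i |: (A :\ j)) then face_sign (A :\ j) i else 0.
Proof. by move=> DA; rewrite /cone_coef asboolT //=; apply: Dl_down DA; apply: subsetDl. Qed.

Lemma sum_bdry_cone_coef k A B : Dl A ->
  \sum_C bdry_coef k A C * cone_coef C B =
  if #|A| == k then \sum_(j in A) face_sign A j * cone_coef (A :\ j) B else 0.
Proof.
move=> DA; under eq_bigr do rewrite bdry_coefE //.
case: (#|A| == k); last by rewrite big1 // => C _; rewrite mul0r.
under eq_bigr do rewrite big_distrl /= big_mkcondr /=.
rewrite exchange_big /=; apply: eq_bigr => j jA.
by rewrite -big_mkcond /= big_pred1_eq.
Qed.

Lemma setU1_setD1 A j : i \notin A -> (i |: A) :\ j = if j == i then A else i |: (A :\ j).
Proof.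
move=> iA; case: eqP => [->|/eqP ji]; first by rewrite finset.setU1K.
by apply/setP => l; rewrite !inE; case: (eqVneq l i) => [->|//]; rewrite eq_sym ji.
Qed.

Lemma bdry_coef_setU1 k A B : Dl A -> i \notin A ->
  bdry_coef k.+1 (i |: A) B = if #|A| == k then
    (if B == A then face_sign A i else 0) +
    \sum_(j in A) (if B == i |: (A :\ j) then face_sign (i |: A) j else 0)
  else 0.
Proof.
move=> DA iA; rewrite bdry_coefE; last exact: Dl_cone.
rewrite cardsU1 iA add1n eqSS.
case: (#|A| == k) => //; rewrite big_mkcondr (bigD1 i) ?finset.setU11 //=.
rewrite setU1_setD1 // eqxx face_sign_setU1 //; congr (_ + _).
rewrite (eq_bigl (mem A)) => [|j]; last first.
  by rewrite !inE; case: eqP => [->|]; rewrite ?(negPf iA) ?andbT.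
apply: eq_bigr => j jA; have ji : j != i by apply: contraNneq iA => <-.
by rewrite setU1_setD1 // (negPf ji).
Qed.

Lemma cone_homotopy_coef_apex k A B : Dl A -> i \in A ->
  \sum_C cone_coef A C * bdry_coef k.+1 C B + \sum_C bdry_coef k A C * cone_coef C B =
  proj_coef k A B.
Proof.
move=> DA iA; rewrite big1 ?add0r => [|C _]; last by rewrite /cone_coef iA andbF mul0r.
rewrite sum_bdry_cone_coef // /proj_coef asboolT //=; case: (#|A| == k) => //=.
rewrite (bigD1 i) //= big1 ?addr0 => [|j /andP[jA ji]]; last first.
  by rewrite cone_coef_setD1 // !inE eq_sym ji iA mulr0.
rewrite cone_coef_setD1 // !inE eqxx finset.setD1K // face_sign_setD1 eq_sym.
by case: eqP; rewrite ?face_signK ?mulr0.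
Qed.

Lemma cone_homotopy_coef_base k A B : Dl A -> i \notin A ->
  \sum_C cone_coef A C * bdry_coef k.+1 C B + \sum_C bdry_coef k A C * cone_coef C B =
  proj_coef k A B.
Proof.
move=> DA iA; rewrite (bigD1 (i |: A)) //= big1 ?addr0 => [|C CiA]; last first.
  by rewrite /cone_coef asboolT //= iA (negPf CiA) mul0r.
rewrite /cone_coef asboolT //= iA eqxx /= bdry_coef_setU1 // sum_bdry_cone_coef //.
rewrite /proj_coef asboolT //=; case: (#|A| == k); last by rewrite mulr0 addr0.
rewrite mulrDr -addrA mulr_sumr -big_split /= big1 => [|j jA]; last first.
  rewrite cone_coef_setD1 // !inE (negPf iA) andbF /=.
  by case: (B == _); rewrite ?mulr0 ?addr0 // face_sign_exchange // addNr.
by rewrite addr0 (eq_sym B); case: (A == B); rewrite ?mulr0 ?face_signK.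
Qed.

Lemma cone_homotopy_coef k A B :
  \sum_C cone_coef A C * bdry_coef k.+1 C B + \sum_C bdry_coef k A C * cone_coef C B =
  proj_coef k A B.
Proof.
have [DA|nDA] := pselect (Dl A); first by case: (boolP (i \in A)) => iA;
  [exact: cone_homotopy_coef_apex | exact: cone_homotopy_coef_base].
rewrite /proj_coef (asboolF nDA) !big1 ?addr0 // => C _.
  by rewrite /bdry_coef asboolF ?mul0r //; case.
by rewrite /cone_coef (asboolF nDA) mul0r.
Qed.

Definition cone_mx : 'M[F]_N := \matrix_(a, c) cone_coef (face_of a) (face_of c).
Definition proj_mx k : 'M[F]_N := \matrix_(a, b) proj_coef k (face_of a) (face_of b).

Lemma cone_chain_homotopy k :
  cone_mx *m bdry F Dl k.+1 + bdry F Dl k *m cone_mx = proj_mx k.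
Proof.
apply/matrixP => a b; rewrite !mxE -cone_homotopy_coef -!sum_face_of.
by congr (_ + _); apply: eq_bigr => c _; rewrite !mxE.
Qed.

Lemma nfaces_le_rank_proj k : (nfaces Dl k <= \rank (proj_mx k))%N.
Proof.
set S := [set s : {set 'I_d} | `[< Dl s >] && (#|s| == k)].
pose f (r : 'I_#|S|) : 'I_N := enum_rank (enum_val r).
have E : mxsub f f (proj_mx k) = 1%:M :> 'M_#|S|.
  apply/matrixP => r c; rewrite !mxE /proj_coef /face_of !enum_rankK.
  have := enum_valP r; rewrite inE => ->.
  by rewrite (inj_eq enum_val_inj); case: (r == c).
have := mxrank_mxsub f f (proj_mx k); rewrite E mxrank1; exact.
Qed.

Lemma cone_reduced_homology_trivial : ~ reduced_homology_nontrivial F Dl.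
Proof.
move=> [k]; apply/negP; rewrite -leqNgt addnC.
apply: leq_trans (nfaces_le_rank_proj k) _; rewrite -cone_chain_homotopy.
apply: leq_trans (mxrank_add _ _) _; apply: leq_add.
  exact: mxrankM_maxr.
exact: mxrankM_maxl.
Qed.

End ConeAcyclic.

Lemma exists_pos_lb (R : realDomainType) (s : seq R) :
  exists2 e : R, 0 < e & forall x, x \in s -> 0 < x -> e <= x.
Proof.
elim: s => [|a s [e e0 le_e]]; first by exists 1.
have [a0|a0] := ltrP 0 a; last first.
  exists e => // x; rewrite inE => /orP[/eqP ->|/le_e//] x0.
  by have := lt_le_trans x0 a0; rewrite ltxx.
exists (Num.min e a) => [|x]; first by rewrite lt_min e0 a0.
by rewrite inE ge_min => /orP[/eqP ->|/le_e le_ex /le_ex ->]; rewrite ?lexx ?orbT.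
Qed.

Section Surface.
Variables (R : realType) (d : nat) (V : seq 'rV[R]_d).
Notation pt := 'rV[R]_d.

Lemma ball_rowP (x y : pt) e : 0 < e ->
  ball x e y <-> forall j, x ord0 j - e < y ord0 j < x ord0 j + e.
Proof.
move=> e0; split => [[_ H] j|H]; first by rewrite -ltr_distlC; exact: H.
by split => // i j; rewrite (ord1 i) /ball /= ltr_distlC.
Qed.

Lemma closure_upset : closure (upset V) `<=` upset V.
Proof.
move=> x cx; apply: contrapT => nx.
have nv v : v \in V -> exists j, x ord0 j < v ord0 j.
  move=> vV; apply: contrapT => h; apply: nx; exists v => // j.
  by rewrite leNgt; apply/negP => hj; apply: h; exists j.
have [e e0 le_e] :=
  exists_pos_lb [seq v ord0 j - x ord0 j | v : pt <- V, j : 'I_d <- enum 'I_d].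
have [y [[v vV vy] /(ball_rowP _ _ e0) bxy]] := cx _ (nbhsx_ballx x e e0).
have [j xj] := nv v vV.
have : e <= v ord0 j - x ord0 j.
  apply: le_e; last by rewrite subr_gt0.
  by apply: (allpairs_f (fun (v : pt) j => v ord0 j - x ord0 j)); rewrite ?mem_enum.
by have := vy j; have /andP[] := bxy j; lra.
Qed.

Lemma interior_upsetP x : interior (upset V) x <-> exists2 v, v \in V & dom_gt x v.
Proof.
split.
  move=> /nbhs_ballP [e /= e0 He].
  have [v vV le_vx] : upset V (x - (e / 2) *: const_mx 1).
    by apply/He/ball_rowP => // j; rewrite !mxE mulr1; lra.
  by exists v => // j; have := le_vx j; rewrite !mxE mulr1; lra.
move=> [v vV lt_vx].
have [e e0 le_e] := exists_pos_lb [seq x ord0 j - v ord0 j | j : 'I_d <- enum 'I_d].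
apply/nbhs_ballP; exists e => //= y /(ball_rowP _ _ e0) bxy; exists v => // j.
have : e <= x ord0 j - v ord0 j.
  apply: le_e; last by rewrite subr_gt0.
  by apply: (map_f (fun j => x ord0 j - v ord0 j)); rewrite mem_enum.
by have /andP[] := bxy j; lra.
Qed.

Lemma surfaceP x : surface V x <->
  upset V x /\ forall v, v \in V -> exists j, x ord0 j <= v ord0 j.
Proof.
rewrite /surface; split.
  move=> [cx nix]; split => [|v vV]; first exact: closure_upset.
  apply: contrapT => h; apply/nix/interior_upsetP; exists v => // j.
  by rewrite ltNge; apply/negP => hj; apply: h; exists j.
move=> [ux nx]; split => [|/interior_upsetP [v vV vx]]; first exact: subset_closure.
by have [j] := nx v vV; rewrite leNgt vx.
Qed.

End Surface.

Section DeltaLink.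
Variables (R : realType) (d : nat) (V : seq 'rV[R]_d) (p : 'rV[R]_d).
Hypothesis p_surf : surface V p.
Implicit Types (I J : {set 'I_d}) (v w : 'rV[R]_d).

Lemma shift_coord (eps : R) J j :
  (p + eps *: ind_vec R J) ord0 j = p ord0 j + (if j \in J then eps else 0).
Proof. by rewrite !mxE; case: ifP; rewrite ?mulr1 ?mulr0. Qed.

Definition shiftable J := exists2 eps : R, 0 < eps &
  forall v, v \in V -> exists j, p ord0 j + (if j \in J then eps else 0) <= v ord0 j.

Lemma DeltaP J : Delta V p J <-> shiftable J.
Proof.
split=> [[eps [e0 /surfaceP [_ H]]]|[eps e0 H]].
  by exists eps => // v /H [j]; exists j; rewrite -shift_coord.
exists eps; split => //; apply/surfaceP; split => [|v /H [j hj]].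
  have [[v vV le_vp] _] := (surfaceP V p).1 p_surf.
  by exists v => // j; rewrite shift_coord; have := le_vp j; case: ifP => _; lra.
by exists j; rewrite shift_coord.
Qed.

Lemma shiftable_sub I J : J \subset I -> shiftable I -> shiftable J.
Proof.
move=> JI [eps e0 H]; exists eps => // v /H [j hj]; exists j; apply: le_trans hj.
rewrite lerD2l; case: ifP => [/(fintype.subsetP JI) -> //|_].
by case: ifP => _; lra.
Qed.

Lemma Delta_sub I J : J \subset I -> Delta V p I -> Delta V p J.
Proof. by move=> JI /DeltaP /(shiftable_sub JI) /DeltaP. Qed.

(* Pushing p up along the coordinates where it touches w (other than i) lands in U_i(w). *)
Lemma closure_Uflat i w : w \in V -> dom_le w p -> w ord0 i = p ord0 i ->
  shiftable [set j | (j != i) && (p ord0 j <= w ord0 j)]%SET ->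
  closure (Uflat V i w) p.
Proof.
set J := [set j | _]%SET => wV le_wp wi [eps e0 H] B /nbhs_ballP [e /= ep HB].
pose t := Num.min (e / 2) eps.
have t0 : 0 < t by rewrite lt_min e0 andbT; lra.
have te : t < e by rewrite gt_min; apply/orP; left; lra.
have teps : t <= eps by rewrite ge_min lexx orbT.
exists (p + t *: ind_vec R J); split; last first.
  by apply/HB/ball_rowP => // j; rewrite shift_coord; case: ifP => _; lra.
split.
  apply/surfaceP; split.
    by exists w => // j; rewrite shift_coord; have := le_wp j; case: ifP => _; lra.
  move=> v /H [j hj]; exists j; rewrite shift_coord; apply: le_trans hj.
  by case: ifP => _; lra.
split=> [|j ji]; first by rewrite shift_coord inE eqxx /= wi addr0.
rewrite shift_coord inE ji /=; have := le_wp j.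
by case: (lerP (p ord0 j) (w ord0 j)) => /= h; lra.
Qed.

Lemma closure_Uflat_tight i I v : shiftable I -> v \in V -> dom_le v p ->
  (forall j, j \notin i |: I -> v ord0 j < p ord0 j) -> closure (Uflat V i v) p.
Proof.
move=> [eps e0 H] vV le_vp lt_vp; have [j hj] := H v vV.
have jI : j \notin I by apply/negP => jI; move: hj; rewrite jI; have := le_vp j; lra.
have ji : j = i.
  apply/eqP; apply: contraT => ji; have := lt_vp j; rewrite !inE negb_or ji jI.
  by move: hj; rewrite (negPf jI); lra.
apply: closure_Uflat => //.
  by apply/eqP; rewrite eq_le le_vp -ji; move: hj; rewrite (negPf jI) addr0.
apply: shiftable_sub (_ : shiftable I); last by exists eps.
apply/fintype.subsetP => l; rewrite inE => /andP[li le_pv]; apply: contraT => lI.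
by have := lt_vp l; rewrite !inE negb_or li lI; lra.
Qed.

Lemma Delta_cone i : (forall w, w \in V -> ~ closure (Uflat V i w) p) ->
  forall I, Delta V p I -> Delta V p (i |: I).
Proof.
move=> notU I /DeltaP shI; apply/DeltaP.
have [eps e0 le_eps] :=
  exists_pos_lb [seq v ord0 j - p ord0 j | v : 'rV[R]_d <- V, j : 'I_d <- enum 'I_d].
exists eps => // v vV.
have [[j /andP[jn le_pv]]|out] := pselect (exists j, (j \notin i |: I) && (p ord0 j <= v ord0 j)).
  by exists j; rewrite (negPf jn) addr0.
have [[j lt_pv]|le_vp] := pselect (exists j, p ord0 j < v ord0 j).
  exists j; have : eps <= v ord0 j - p ord0 j.
    apply: le_eps; last by rewrite subr_gt0.
    by apply: (allpairs_f (fun v j => v ord0 j - p ord0 j)); rewrite ?mem_enum.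
  by case: ifP => _; lra.
exfalso; apply: (notU v vV); apply: closure_Uflat_tight shI vV _ _ => j.
  by rewrite leNgt; apply/negP => h; apply: le_vp; exists j.
by move=> jn; rewrite ltNge; apply/negP => h; apply: out; exists j; rewrite jn.
Qed.

End DeltaLink.

Theorem lemma4p10 (R : realType) (d : nat) (V : seq 'rV[R]_d) (p : 'rV[R]_d) :
  antichain V -> surface V p ->
  (exists F : fieldType, syzygy_point F V p) ->
  characteristic V p.
Proof.
move=> _ p_surf [F syz]; split => // i.
have [[w wV cw]|notU] := pselect (exists2 w, w \in V & closure (Uflat V i w) p).
  exists (flat V i w); split; first by exists w.
  by apply: closureS cw => q Uq; exists w; split => //; apply: rt_refl.
exfalso; apply: (cone_reduced_homology_trivial (i := i) _ _ syz).
  by move=> A B; apply: Delta_sub.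
by apply: Delta_cone => // w wV cw; apply: notU; exists w.
Qed.
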